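(* Let $u_t=F$ be an autonomous evolution PDE for a scalar $u(x,t)$, with $F=c_1 u + c_2 u^2 + c_3 u^3 + c_4 u_x + c_5 u_{xx} + c_6 u_{xxx} + c_7 u_{xxxx} + c_8\, u u_x + c_9\, u u_{xx} + c_{10}\, u^2 u_x$ for real constants $c_j$, where $1,u,u^2,u_x,u_{xx},u\cdot u_x$ are linearly independent on the jet space $J^{(2)}$. If the PDE is Galilean-invariant, i.e. admits the Lie point symmetry generator $t\partial_x+\partial_u$, then its true support $S^*=\{\text{terms with } c_j\neq 0\}$ is contained in the implementation-reduced library $\mathcal{L}_G=\{u_x,u_{xx},u_{xxx},u_{xxxx},u\cdot u_x,u\cdot u_{xx},u^2\cdot u_x\}$ (the ten-term library with $u,u^2,u^3$ removed).
   Context: A PDE $u_t=F$ admits the generator $\mathbf v=t\partial_x+\partial_u$ if the prolonged vector field $\mathrm{pr}\,\mathbf v$ annihilates $u_t-F$ whenever $u_t=F$; equivalently the Galilean boost $(x,t,u)\mapsto(x+ct,t,u+c)$ maps solutions to solutions for every $c\in\mathbb R$. Subscripts denote partial derivatives. *)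

From HB Require Import structures.
From mathcomp Require Import all_boot all_order all_algebra.
From mathcomp Require Import mpoly.
Set Implicit Arguments. Unset Strict Implicit. Unset Printing Implicit Defensive.
Import Order.TTheory GRing.Theory Num.Theory.
Local Open Scope ring_scope.

(* Jet space.  Coordinates: x, t, and u_{i,j} = d^i_x d^j_t u for i,j < jK. *)
(* jK = 8 is far more than needed: all equations considered have order    *)
(* <= 4 in x and <= 1 in t, and the prolongation formula needs jet        *)
(* coordinates of order <= 6.                                             *)
Definition jK : nat := 8.
Definition jN : nat := (jK * jK + 1).+1.

Notation jetfun R := {mpoly R[jN]}.

Definition xvar : 'I_jN := inord 0.
Definition tvar : 'I_jN := inord 1.
Definition uvar (i j : nat) : 'I_jN := inord (2 + i * jK + j).

Definition Xc {R : comNzRingType} : jetfun R := 'X_xvar.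
Definition Tc {R : comNzRingType} : jetfun R := 'X_tvar.
(* u_{i,j}; beyond the truncation it is 0 (never reached in practice) *)
Definition Uc {R : comNzRingType} (i j : nat) : jetfun R :=
  if (i < jK)%N && (j < jK)%N then 'X_(uvar i j) else 0.

Section Prolongation.
Variable R : comNzRingType.

Definition Dx (p : jetfun R) : jetfun R :=
  p^`M(xvar) + \sum_(i < jK) \sum_(j < jK) Uc i.+1 j * p^`M(uvar i j).
Definition Dt (p : jetfun R) : jetfun R :=
  p^`M(tvar) + \sum_(i < jK) \sum_(j < jK) Uc i j.+1 * p^`M(uvar i j).

(* a point-symmetry generator  v = xi d_x + tau d_t + phi d_u,
   xi tau phi functions of (x,t,u) (given as polynomials) *)
Record generator := Generator { gxi : jetfun R; gtau : jetfun R; gphi : jetfun R }.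

Definition characteristic (v : generator) : jetfun R :=
  gphi v - gxi v * Uc 1 0 - gtau v * Uc 0 1.

Definition prolcoef (v : generator) (i j : nat) : jetfun R :=
  iter i Dx (iter j Dt (characteristic v)) + gxi v * Uc i.+1 j + gtau v * Uc i j.+1.

Definition prolong (v : generator) (P : jetfun R) : jetfun R :=
  gxi v * P^`M(xvar) + gtau v * P^`M(tvar)
  + \sum_(i < jK) \sum_(j < jK) prolcoef v i j * P^`M(uvar i j).

Definition admits_generator (F : jetfun R) (v : generator) : Prop :=
  forall a : 'I_jN -> R,
    (Uc 0 1 - F).@[a] = 0 -> (prolong v (Uc 0 1 - F)).@[a] = 0.

Definition galilean : generator := Generator Tc 0 1.

End Prolongation.

(* The ten-term library; index j : 'I_10 corresponds to c_{j+1}:          *)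
(*  0:u 1:u^2 2:u^3 3:u_x 4:u_xx 5:u_xxx 6:u_xxxx 7:u u_x 8:u u_xx 9:u^2 u_x *)
Definition libterm {R : comNzRingType} (k : 'I_10) : jetfun R :=
  nth 0 [:: Uc 0 0; Uc 0 0 ^+ 2; Uc 0 0 ^+ 3; Uc 1 0; Uc 2 0; Uc 3 0; Uc 4 0;
            Uc 0 0 * Uc 1 0; Uc 0 0 * Uc 2 0; Uc 0 0 ^+ 2 * Uc 1 0] k.

Definition rhs {R : comNzRingType} (c : 'I_10 -> R) : jetfun R :=
  \sum_(k < 10) c k *: libterm k.

Definition true_support {R : comNzRingType} (c : 'I_10 -> R) : {set 'I_10} :=
  [set k | c k != 0].

Definition lib_LG : {set 'I_10} := [set k : 'I_10 | (3 <= k)%N].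

From HB Require Import structures.
From mathcomp Require Import all_boot all_order all_algebra.
From mathcomp Require Import mpoly.
From mathcomp Require Import ring zify.
Set Implicit Arguments. Unset Strict Implicit. Unset Printing Implicit Defensive.
Import Order.TTheory GRing.Theory Num.Theory.
Local Open Scope ring_scope.

(* The Galilean boost t d_x + d_u has characteristic Q = 1 - t u_x.  As
   D_x t = 0, the prolongation coefficients phi^{x^k} = D_x^k Q + t u_{k+1,0}
   vanish for k >= 1, while phi^u = 1 and phi^t = D_t Q + t u_{xt} = - u_x.
   So for an autonomous evolution equation u_t = F(u, u_x, u_xx, ...) the
   invariance condition is u_x + F_u = 0 on solutions.  At the jet point with
   u = s, all x-derivatives zero and u_t = F, this reads
   c_1 + 2 c_2 s + 3 c_3 s^2 = 0 for every s, hence c_1 = c_2 = c_3 = 0. *)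

Section JetCalculus.
Variable R : comNzRingType.
Implicit Types (p q : jetfun R) (w : nat -> nat -> jetfun R).

Lemma mderivXU (k l : 'I_jN) : ('X_k : jetfun R)^`M(l) = (k == l)%:R.
Proof.
rewrite mderivX mnm1E; case: eqP => [->|_]; last by rewrite scale0r.
have -> : (U_(l) - U_(l) = 0)%MM by apply/mnmP => m; rewrite !mnmE subnn.
by rewrite mpolyX0 scale1r.
Qed.

Lemma uvarE i j : (i < jK)%N -> (j < jK)%N -> uvar i j = (2 + i * jK + j)%N :> nat.
Proof. rewrite /uvar /jK => hi hj; rewrite inordK // /jN /jK; lia. Qed.

Lemma uvar_eq i j k l : (i < jK)%N -> (j < jK)%N -> (k < jK)%N -> (l < jK)%N ->
  (uvar i j == uvar k l) = (i == k) && (j == l).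
Proof.
move=> hi hj hk hl; apply/eqP/andP => [/(congr1 val)|[/eqP-> /eqP->]] //=.
rewrite !uvarE // => e; move: hi hj hk hl e; rewrite /jK => *.
by split; apply/eqP; lia.
Qed.

Lemma mderivUc_u i j k l : (i < jK)%N -> (j < jK)%N -> (k < jK)%N -> (l < jK)%N ->
  (Uc i j : jetfun R)^`M(uvar k l) = ((i == k) && (j == l))%:R.
Proof. by move=> hi hj *; rewrite /Uc hi hj mderivXU uvar_eq. Qed.

Lemma mderivUc_x i j : (Uc i j : jetfun R)^`M(xvar) = 0.
Proof.
rewrite /Uc; case: ifP => [/andP[hi hj]|_]; last exact: mderiv0.
by rewrite mderivXU; case: eqP => // => /(congr1 val) /=; rewrite uvarE // inordK.
Qed.

Lemma mderivUc_t i j : (Uc i j : jetfun R)^`M(tvar) = 0.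
Proof.
rewrite /Uc; case: ifP => [/andP[hi hj]|_]; last exact: mderiv0.
by rewrite mderivXU; case: eqP => // => /(congr1 val) /=; rewrite uvarE // inordK.
Qed.

Lemma mderivTc_x : (Tc : jetfun R)^`M(xvar) = 0.
Proof. by rewrite mderivXU; case: eqP => // => /(congr1 val) /=; rewrite !inordK. Qed.

Lemma mderivTc_t : (Tc : jetfun R)^`M(tvar) = 1.
Proof. by rewrite mderivXU eqxx. Qed.

Lemma mderivTc_u i j : (i < jK)%N -> (j < jK)%N -> (Tc : jetfun R)^`M(uvar i j) = 0.
Proof.
move=> hi hj; rewrite mderivXU; case: eqP => // => /(congr1 val) /=.
by rewrite uvarE // inordK.
Qed.

Definition total_deriv (k : 'I_jN) w p : jetfun R :=
  p^`M(k) + \sum_(i < jK) \sum_(j < jK) w i j * p^`M(uvar i j).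

Lemma total_derivB k w p q :
  total_deriv k w (p - q) = total_deriv k w p - total_deriv k w q.
Proof.
rewrite /total_deriv mderivB opprD addrACA -sumrB; congr (_ + _).
apply: eq_bigr => i _; rewrite -sumrB; apply: eq_bigr => j _.
by rewrite mderivB mulrBr.
Qed.

Lemma total_deriv0 k w : total_deriv k w 0 = 0.
Proof. by rewrite -{1}(subrr 0) total_derivB subrr. Qed.

Lemma total_derivN k w p : total_deriv k w (- p) = - total_deriv k w p.
Proof. by rewrite -sub0r total_derivB total_deriv0 sub0r. Qed.

Lemma total_derivM k w p q :
  total_deriv k w (p * q) = total_deriv k w p * q + p * total_deriv k w q.
Proof.
rewrite /total_deriv mderivM mulrDl mulrDr [RHS]addrACA; congr (_ + _).
rewrite mulr_suml mulr_sumr -big_split; apply: eq_bigr => i _.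
rewrite mulr_suml mulr_sumr -big_split; apply: eq_bigr => j _.
by rewrite mderivM mulrDr [w i j * (_ * q)]mulrA [w i j * (p * _)]mulrCA.
Qed.

Lemma total_deriv1 k w : total_deriv k w 1 = 0.
Proof.
rewrite /total_deriv -mpolyC1 mderivC add0r big1 // => i _.
by rewrite big1 // => j _; rewrite mderivC mulr0.
Qed.

Lemma total_deriv_Tc k w : total_deriv k w Tc = Tc^`M(k).
Proof.
rewrite /total_deriv big1 ?addr0 // => i _.
by rewrite big1 // => j _; rewrite mderivTc_u // mulr0.
Qed.

Lemma total_deriv_Uc k w i j :
  (i < jK)%N -> (j < jK)%N -> (Uc i j : jetfun R)^`M(k) = 0 ->
  total_deriv k w (Uc i j) = w i j.
Proof.
move=> hi hj hk; rewrite /total_deriv hk add0r (bigD1 (Ordinal hi)) //=.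
rewrite (bigD1 (Ordinal hj)) //= mderivUc_u // !eqxx mulr1 !big1 ?addr0 //.
  move=> m; rewrite -val_eqE /= => /negPf hm; rewrite big1 // => l _.
  by rewrite mderivUc_u // eq_sym hm mulr0.
move=> l; rewrite -val_eqE /= => /negPf hl.
by rewrite mderivUc_u // eqxx eq_sym hl mulr0.
Qed.

Lemma DxE p : Dx p = total_deriv xvar (fun i j => Uc i.+1 j) p.
Proof. by []. Qed.

Lemma DtE p : Dt p = total_deriv tvar (fun i j => Uc i j.+1) p.
Proof. by []. Qed.

Lemma Dx_Tc : Dx (Tc : jetfun R) = 0.
Proof. by rewrite DxE total_deriv_Tc mderivTc_x. Qed.

Lemma Dt_Tc : Dt (Tc : jetfun R) = 1.
Proof. by rewrite DtE total_deriv_Tc mderivTc_t. Qed.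

Lemma Dx_Uc i j : Dx (Uc i j : jetfun R) = Uc i.+1 j.
Proof.
have [/andP[hi hj]|out] := boolP ((i < jK)%N && (j < jK)%N).
  by rewrite DxE total_deriv_Uc // mderivUc_x.
rewrite /Uc (negbTE out) DxE total_deriv0; case: ifP => // /andP[hi hj].
by move: out; rewrite hj (ltn_trans _ hi).
Qed.

Lemma Dt_Uc i j : Dt (Uc i j : jetfun R) = Uc i j.+1.
Proof.
have [/andP[hi hj]|out] := boolP ((i < jK)%N && (j < jK)%N).
  by rewrite DtE total_deriv_Uc // mderivUc_t.
rewrite /Uc (negbTE out) DtE total_deriv0; case: ifP => // /andP[hi hj].
by move: out; rewrite hi (ltn_trans _ hj).
Qed.

End JetCalculus.

Section GalileanProlongation.
Variable R : comNzRingType.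
Notation galilean := (galilean R).

Lemma galilean_characteristic : characteristic galilean = 1 - Tc * Uc 1 0.
Proof. by rewrite /characteristic /= mul0r subr0. Qed.

Lemma Dx_TcM (p : jetfun R) : Dx (Tc * p) = Tc * Dx p.
Proof. by rewrite !DxE total_derivM -DxE Dx_Tc mul0r add0r. Qed.

Lemma iter_Dx_galilean_characteristic i :
  iter i.+1 (@Dx R) (characteristic galilean) = - (Tc * Uc i.+2 0).
Proof.
elim: i => [|i /= IH].
  rewrite /= galilean_characteristic DxE total_derivB total_deriv1 -DxE.
  by rewrite Dx_TcM Dx_Uc sub0r.
by rewrite IH DxE total_derivN -DxE Dx_TcM Dx_Uc.
Qed.

Lemma galilean_prolcoef00 : prolcoef galilean 0 0 = 1.
Proof. rewrite /prolcoef /= galilean_characteristic; ring. Qed.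

Lemma galilean_prolcoef01 : prolcoef galilean 0 1 = - Uc 1 0.
Proof.
rewrite /prolcoef /= galilean_characteristic DtE total_derivB total_deriv1.
rewrite total_derivM -!DtE Dt_Tc Dt_Uc; ring.
Qed.

Lemma galilean_prolcoefS0 i : prolcoef galilean i.+1 0 = 0.
Proof. rewrite /prolcoef [iter 0 _ _]/= iter_Dx_galilean_characteristic /=; ring. Qed.

Lemma prolong_galilean_evolution (F : jetfun R) :
  F^`M(xvar) = 0 ->
  (forall i j, (i < jK)%N -> (j < jK)%N -> (0 < j)%N -> F^`M(uvar i j) = 0) ->
  prolong galilean (Uc 0 1 - F) = - (Uc 1 0 + F^`M(uvar 0 0)).
Proof.
move=> Fx Ft.
have Px : (Uc 0 1 - F)^`M(xvar) = 0 by rewrite mderivB mderivUc_x Fx subrr.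
have Pt i j : (i < jK)%N -> (j < jK)%N -> (0 < j)%N ->
    (Uc 0 1 - F)^`M(uvar i j) = ((i == 0) && (j == 1))%:R.
  move=> hi hj j_gt0; rewrite mderivB mderivUc_u // Ft // subr0.
  by rewrite eq_sym [1 == j]eq_sym.
rewrite /prolong /= Px mulr0 mul0r !add0r big_ord_recl [X in _ + X]big1 => [|i _].
  rewrite addr0 big_ord_recl [X in _ + X]big_ord_recl big1 => [|j _].
    rewrite galilean_prolcoef00 galilean_prolcoef01 (Pt 0 1) //.
    by rewrite mderivB mderivUc_u //= mul1r sub0r mulNr mulr1 addr0 opprD addrC.
  by rewrite !lift0 Pt //= ?mulr0 //; exact: ltn_ord j.
rewrite big_ord_recl lift0 galilean_prolcoefS0 mul0r add0r big1 // => j _.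
by rewrite !lift0 Pt //= ?mulr0 //; [exact: ltn_ord i | exact: ltn_ord j].
Qed.

End GalileanProlongation.

Section EvolutionAtRest.
Variables (R : comNzRingType) (c : 'I_10 -> R).

Definition rest_jet (s v : R) : 'I_jN -> R :=
  fun m => if m == uvar 0 0 then s else if m == uvar 0 1 then v else 0.

Lemma rest_jet_Uc s v i j : (i < jK)%N -> (j < jK)%N ->
  (Uc i j).@[rest_jet s v] =
    if (i == 0) && (j == 0) then s else if (i == 0) && (j == 1) then v else 0.
Proof. by move=> hi hj; rewrite /Uc hi hj mevalXU /rest_jet !uvar_eq. Qed.

Lemma rhs_at_rest s v : (rhs c).@[rest_jet s v] =
  c ord0 * s + c (lift ord0 ord0) * s ^+ 2 + c (lift ord0 (lift ord0 ord0)) * s ^+ 3.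
Proof.
rewrite /rhs !big_ord_recl big_ord0 /libterm /=.
by rewrite !(mevalD, mevalZ, mevalM, rmorphXn, meval0) !rest_jet_Uc //=; ring.
Qed.

Lemma mderiv_rhs_x : (rhs c)^`M(xvar) = 0.
Proof.
rewrite /rhs !big_ord_recl big_ord0 /libterm /=.
rewrite !(mderivD, mderivZ, mderivM, mderiv0) !mderivUc_x.
by rewrite !(mul0r, mulr0, addr0, scaler0).
Qed.

Lemma mderiv_rhs_t i j : (i < jK)%N -> (j < jK)%N -> (0 < j)%N ->
  (rhs c)^`M(uvar i j) = 0.
Proof.
move=> hi hj; rewrite lt0n eq_sym => /negPf j0.
rewrite /rhs !big_ord_recl big_ord0 /libterm /=.
rewrite !(mderivD, mderivZ, mderivM, mderiv0) !mderivUc_u // j0 !andbF.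
by rewrite !(mul0r, mulr0, addr0, scaler0).
Qed.

Lemma mderiv_rhs_u_at_rest s v : ((rhs c)^`M(uvar 0 0)).@[rest_jet s v] =
  c ord0 + c (lift ord0 ord0) *+ 2 * s + c (lift ord0 (lift ord0 ord0)) *+ 3 * s ^+ 2.
Proof.
rewrite /rhs !big_ord_recl big_ord0 /libterm /=.
rewrite !(mderivD, mderivZ, mderivM, mderiv0) !mderivUc_u //=.
by rewrite !(mevalD, mevalZ, mevalM, rmorphXn, meval0, meval1) !rest_jet_Uc //=; ring.
Qed.

Lemma galilean_reaction_identity : admits_generator (rhs c) (galilean R) ->
  forall s, c ord0 + c (lift ord0 ord0) *+ 2 * s
            + c (lift ord0 (lift ord0 ord0)) *+ 3 * s ^+ 2 = 0.
Proof.
move=> adm s.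
(* [rhs c] does not involve [u_t], so this jet point lies on the equation. *)
pose v := (rhs c).@[rest_jet s 0].
have := adm (rest_jet s v).
rewrite mevalB rest_jet_Uc //= [v]rhs_at_rest rhs_at_rest subrr => /(_ erefl).
rewrite prolong_galilean_evolution; last 2 first.
- exact: mderiv_rhs_x.
- exact: mderiv_rhs_t.
rewrite mevalN mevalD rest_jet_Uc //= mderiv_rhs_u_at_rest add0r.
by move/eqP; rewrite oppr_eq0 => /eqP.
Qed.

End EvolutionAtRest.

Lemma quadratic_identity_eq0 (R : numDomainType) (a b c : R) :
  (forall s, a + b * s + c * s ^+ 2 = 0) -> [/\ a = 0, b = 0 & c = 0].
Proof.
move=> q; have a0 : a = 0 by have := q 0; rewrite !(mulr0, expr0n, addr0).
have := q 1; have := q (-1); rewrite a0 !(add0r, mulr1, mulrN1, expr1n, sqrrN).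
move=> qm qp; have c0 : c = 0.
  have c2 : c *+ 2 = 0 by rewrite -[RHS](addr0 0) -{1}qp -qm; ring.
  by move/eqP: c2; rewrite mulrn_eq0 => /eqP.
by split=> //; move: qp; rewrite c0 addr0.
Qed.

Theorem mainTheorem4 (R : realFieldType) (c : 'I_10 -> R) :
  admits_generator (rhs c) (galilean R) ->
  true_support c \subset lib_LG.
Proof.
move=> adm.
have [c0 c1 c2] := quadratic_identity_eq0 (galilean_reaction_identity adm).
move/eqP: c1; move/eqP: c2; rewrite !mulrn_eq0 /= => /eqP c2 /eqP c1.
apply/subsetP => k; rewrite !inE; apply: contraR; rewrite -ltnNge => k_lt3.
apply/eqP; case: k k_lt3 => [[|[|[|k]]] hk] _ //.
- by rewrite -c0; congr c; exact: val_inj.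
- by rewrite -c1; congr c; exact: val_inj.
- by rewrite -c2; congr c; exact: val_inj.
Qed.
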